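(* Let $\mu>1$ be a Salem number of degree four, $K=\mathbb{Q}(\mu+\mu^{-1})$, and let $\tau$ be an embedding of $\mathbb{Q}(\mu)$ into $\mathbb{C}$ whose restriction to $K$ is the nontrivial embedding of $K$ (so $\tau(\mu)=e^{i\nu}$ for some $\nu\in(0,\pi)$, choosing $\tau$ appropriately). Suppose there is $D\in\mathcal{O}_K$ with $\mathbb{Q}(\mu)=K(\sqrt D)$ and $\mu=t+u\sqrt D$ with $t,u\in\mathcal{O}_K$. Then there exists $m\in\{0,1,2\}$ such that $\mu^{m+1}=t_m+u_m\sqrt D$ with $t_m,u_m\in\mathcal{O}_K$ and $\tau(t_m)^2>\tfrac12$.
   Context: A Salem number is a real algebraic integer $\lambda>1$ such that $\lambda^{-1}$ is a Galois conjugate of $\lambda$ and all other conjugates of $\lambda$ lie on the unit circle. $\mathcal{O}_K$ is the ring of integers of $K$. *)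

From HB Require Import structures.
From mathcomp Require Import all_boot all_order all_algebra all_field.
Set Implicit Arguments. Unset Strict Implicit. Unset Printing Implicit Defensive.
Import Order.TTheory GRing.Theory Num.Theory.
Local Open Scope ring_scope.

Definition is_subfield (F : algC -> Prop) : Prop :=
  F 0 /\ F 1 /\
  (forall x y, F x -> F y -> F (x + y)) /\
  (forall x, F x -> F (- x)) /\
  (forall x y, F x -> F y -> F (x * y)) /\
  (forall x, F x -> F x^-1).

Definition gen_field (S : algC -> Prop) : algC -> Prop :=
  fun z => forall F, is_subfield F -> (forall x, S x -> F x) -> F z.

Definition Qadj (a : algC) : algC -> Prop := gen_field (fun x => x = a).

Definition Fadj (K : algC -> Prop) (b : algC) : algC -> Prop :=
  gen_field (fun x => K x \/ x = b).

Definition ring_of_integers (K : algC -> Prop) : algC -> Prop :=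
  fun z => K z /\ z \in Aint.

Definition salem_of_degree (mu : algC) (d : nat) : Prop :=
  [/\ mu \in Aint, mu \is Num.real, 1 < mu &
   exists p : {poly rat},
     p \is monic /\ irreducible_poly p /\ size p = d.+1 /\
     root (map_poly ratr p) mu /\ root (map_poly ratr p) mu^-1 /\
     (forall z, root (map_poly ratr p) z -> z != mu -> z != mu^-1 -> `|z| = 1)].

From HB Require Import structures.
From mathcomp Require Import all_boot all_order all_algebra all_field.
From mathcomp Require Import ring.
Import Order.TTheory GRing.Theory Num.Theory.
Local Open Scope ring_scope.

(** Put [a = mu + mu^-1] and [K = Q(a)]. As [tau] moves [a], [tau mu] is a
    root of the minimal polynomial of [mu] other than [mu] and [mu^-1], so
    [|tau mu| = 1]; hence [K] is real under both embeddings, and [mu] is not in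
    [K] since otherwise [tau mu = 1] or [-1]. Comparing coordinates on the basis
    [1, s] in [mu^2 - a mu + 1 = 0] gives [a = 2 t] and [u^2 D = t^2 - 1], so
    [t + u s] has norm one and the first coordinates of [mu^2], [mu^3] are the
    Chebyshev polynomials [2 t^2 - 1] and [4 t^3 - 3 t]. With [c = tau t = cos nu]
    their images are [cos 2 nu] and [cos 3 nu], and [cos^2] of [nu], [2 nu], [3 nu]
    cannot all be at most [1/2] unless [c^2 = 1/2], which the algebraic integer
    [t] excludes. *)

Lemma is_subfield_gen (S : algC -> Prop) : is_subfield (gen_field S).
Proof.
split; [|split; [|split; [|split; [|split]]]].
- by move=> F [].
- by move=> F [_ []].
- by move=> x y Sx Sy F subF SF; case: (subF) => _ [_ [FD _]]; apply: FD; [apply: Sx | apply: Sy].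
- by move=> x Sx F subF SF; case: (subF) => _ [_ [_ [FN _]]]; apply: FN; apply: Sx.
- by move=> x y Sx Sy F subF SF; case: (subF) => _ [_ [_ [_ [FM _]]]]; apply: FM; [apply: Sx | apply: Sy].
- by move=> x Sx F subF SF; case: (subF) => _ [_ [_ [_ [_ FV]]]]; apply: FV; apply: Sx.
Qed.

Lemma gen_field_min {S F : algC -> Prop} :
  is_subfield F -> (forall x, S x -> F x) -> forall z, gen_field S z -> F z.
Proof. by move=> subF SF z; apply. Qed.

Lemma gen_field_sub {S : algC -> Prop} {x} : S x -> gen_field S x.
Proof. by move=> Sx F _; apply. Qed.

Section Subfield.

Variable K : algC -> Prop.
Hypothesis subK : is_subfield K.

Lemma subfield0 : K 0.
Proof. by case: subK. Qed.

Lemma subfield1 : K 1.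
Proof. by case: subK => _ []. Qed.

Lemma subfieldD x y : K x -> K y -> K (x + y).
Proof. by case: subK => _ [_ [KD _]]; apply: KD. Qed.

Lemma subfieldN x : K x -> K (- x).
Proof. by case: subK => _ [_ [_ [KN _]]]; apply: KN. Qed.

Lemma subfieldM x y : K x -> K y -> K (x * y).
Proof. by case: subK => _ [_ [_ [_ [KM _]]]]; apply: KM. Qed.

Lemma subfieldV x : K x -> K x^-1.
Proof. by case: subK => _ [_ [_ [_ [_ KV]]]]; apply: KV. Qed.

Lemma subfieldB x y : K x -> K y -> K (x - y).
Proof. by move=> Kx Ky; apply: subfieldD => //; apply: subfieldN. Qed.

Lemma subfieldX x n : K x -> K (x ^+ n).
Proof.
by move=> Kx; elim: n => [|n IHn]; rewrite ?expr0 ?exprS; [apply: subfield1 | apply: subfieldM].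
Qed.

Lemma subfield_nat n : K n%:R.
Proof.
elim: n => [|n IHn]; first exact: subfield0.
by rewrite mulrS; apply: subfieldD => //; apply: subfield1.
Qed.

Ltac subfield_closure :=
  repeat first [ assumption | apply: subfieldD | apply: subfieldB | apply: subfieldN
               | apply: subfieldM | apply: subfieldX | apply: subfield1 | apply: subfield_nat ].

Lemma subfield_coord_eq0 {s x y} : ~ K s -> K x -> K y -> x + y * s = 0 -> x = 0 /\ y = 0.
Proof.
move=> Ks Kx Ky xys0.
have y0 : y = 0.
  apply/eqP; apply: contraT => y_neq0; exfalso; apply: Ks.
  have -> : s = - (y^-1 * x) by rewrite -mulrN -(addr0 (- x)) -xys0 addKr mulKf.
  by apply/subfieldN/subfieldM => //; apply: subfieldV.
by split=> //; move: xys0; rewrite y0 mul0r addr0.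
Qed.

Lemma subfield_norm1_coords {mu s t u} :
  ~ K mu -> mu != 0 -> K (mu + mu^-1) -> K (s ^+ 2) -> K t -> K u ->
  mu = t + u * s -> mu + mu^-1 = 2 * t /\ u ^+ 2 * s ^+ 2 = t ^+ 2 - 1.
Proof.
move=> Kmu mu_neq0 Ka Ks2 Kt Ku mu_ts; set a := mu + mu^-1 in Ka *.
have Ks : ~ K s.
  by move=> Ks; apply: Kmu; rewrite mu_ts; apply: subfieldD => //; apply: subfieldM.
have u_neq0 : u != 0.
  by apply/eqP=> u0; apply: Kmu; rewrite mu_ts u0 mul0r addr0.
have : (t ^+ 2 + u ^+ 2 * s ^+ 2 - a * t + 1) + ((2 * t - a) * u) * s = 0.
  have -> : 0 = mu ^+ 2 - a * mu + 1 by rewrite /a; field.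
  by rewrite mu_ts; ring.
case/(subfield_coord_eq0 Ks); [by subfield_closure | by subfield_closure | move=> x0 /eqP; rewrite mulf_eq0 (negbTE u_neq0) orbF subr_eq0 eq_sym => /eqP a2t].
by split=> //; apply/eqP; rewrite -subr_eq0 -x0 a2t; apply/eqP; ring.
Qed.

Lemma ring_of_integersB x y :
  ring_of_integers K x -> ring_of_integers K y -> ring_of_integers K (x - y).
Proof. by move=> [Kx Ax] [Ky Ay]; split; [apply: subfieldB | apply: rpredB]. Qed.

Lemma ring_of_integersM x y :
  ring_of_integers K x -> ring_of_integers K y -> ring_of_integers K (x * y).
Proof. by move=> [Kx Ax] [Ky Ay]; split; [apply: subfieldM | apply: rpredM]. Qed.

Lemma ring_of_integersX x n : ring_of_integers K x -> ring_of_integers K (x ^+ n).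
Proof. by move=> [Kx Ax]; split; [apply: subfieldX | apply: rpredX]. Qed.

Lemma ring_of_integers_nat n : ring_of_integers K n%:R.
Proof. by split; [apply: subfield_nat | apply: rpred_nat]. Qed.

Lemma ring_of_integers1 : ring_of_integers K 1.
Proof. exact: ring_of_integers_nat 1. Qed.

End Subfield.

Ltac ring_of_integers_closure :=
  repeat first [ assumption | apply: ring_of_integersB | apply: ring_of_integersM
               | apply: ring_of_integersX | apply: ring_of_integers_nat
               | apply: ring_of_integers1 ].

Lemma is_subfield_real : is_subfield (fun x : algC => x \is Num.real).
Proof.
split; [|split; [|split; [|split; [|split]]]] => *;
  by rewrite ?real0 ?real1 ?realD ?realN ?realM ?realV.
Qed.

Lemma is_subfield_preim (f : {rmorphism algC -> algC}) {F : algC -> Prop} :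
  is_subfield F -> is_subfield (fun x => F (f x)).
Proof.
move=> subF; split; [|split; [|split; [|split; [|split]]]].
- by rewrite rmorph0; apply: subfield0.
- by rewrite rmorph1; apply: subfield1.
- by move=> x y Fx Fy; rewrite rmorphD; apply: subfieldD.
- by move=> x Fx; rewrite rmorphN; apply: subfieldN.
- by move=> x y Fx Fy; rewrite rmorphM; apply: subfieldM.
- by move=> x Fx; rewrite fmorphV; apply: subfieldV.
Qed.

Lemma is_subfield_meet {F G : algC -> Prop} :
  is_subfield F -> is_subfield G -> is_subfield (fun x => F x /\ G x).
Proof.
move=> subF subG; split; [|split; [|split; [|split; [|split]]]].
- by split; apply: subfield0.
- by split; apply: subfield1.
- by move=> x y [Fx Gx] [Fy Gy]; split; apply: subfieldD.
- by move=> x [Fx Gx]; split; apply: subfieldN.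
- by move=> x y [Fx Gx] [Fy Gy]; split; apply: subfieldM.
- by move=> x [Fx Gx]; split; apply: subfieldV.
Qed.

Lemma is_subfield_fixed (f : {rmorphism algC -> algC}) : is_subfield (fun x => f x = x).
Proof.
split; [|split; [|split; [|split; [|split]]]].
- exact: rmorph0.
- exact: rmorph1.
- by move=> x y fx fy; rewrite rmorphD fx fy.
- by move=> x fx; rewrite rmorphN fx.
- by move=> x y fx fy; rewrite rmorphM fx fy.
- by move=> x fx; rewrite fmorphV fx.
Qed.

Lemma chebyshev_sqr_gt_half {R : numFieldType} {x : R} :
  x \is Num.real -> x != 1 / 2 ->
  [|| 1 / 2 < x, 1 / 2 < (2 * x - 1) ^+ 2 | 1 / 2 < x * (4 * x - 3) ^+ 2].
Proof.
move=> xR x_neq; have two_neq0 : (2 : R) != 0 by rewrite pnatr_eq0.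
apply: contraT; rewrite !negb_or -!real_leNgt //;
  try by rewrite ?(rpredB, rpredM, rpredX, rpredV, rpred_nat, rpred1).
case/and3P=> x_le ch2_le ch3_le.
pose y := 1 / 2 - x; have y_gt0 : 0 < y by rewrite lt0r subr_eq0 eq_sym x_neq subr_ge0.
rewrite (_ : (2 * x - 1) ^+ 2 = 4 * y ^+ 2) in ch2_le; last by rewrite /y; field.
rewrite (_ : x * _ = 1 / 2 + (3 * y - 16 * y ^+ 3)) in ch3_le; last by rewrite /y; field.
have : 3 <= 16 * y ^+ 2.
  by rewrite -(ler_pM2r y_gt0) -mulrA -exprSr -subr_le0 -(gerDl (1 / 2)).
have : 16 * y ^+ 2 <= 2.
  have -> : 16 * y ^+ 2 = 4 * (4 * y ^+ 2) by ring.
  have -> : (2 : R) = 4 * (1 / 2) by field.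
  by rewrite ler_pM2l // ltr0n.
by move=> /[swap] /le_trans /[apply]; rewrite ler_nat.
Qed.

Lemma half_notin_Aint : (1 / 2 : algC) \notin Aint.
Proof.
apply/negP=> /(Cint_rat_Aint (rpred_div (rpred1 _) (rpred_nat _ 2))).
move/norm_intr_ge1; rewrite mul1r invr_eq0 pnatr_eq0 => /(_ isT).
by rewrite ger0_norm ?invr_ge0 ?ler0n // invf_ge1 ?ltr0n // lern1.
Qed.

Section NormOnePowers.

Variables (R : comPzRingType) (t u s : R).
Hypothesis norm1 : u ^+ 2 * s ^+ 2 = t ^+ 2 - 1.

Lemma norm1_expr2 : (t + u * s) ^+ 2 = (2 * t ^+ 2 - 1) + (2 * t * u) * s.
Proof.
rewrite (_ : _ ^+ 2 = t ^+ 2 + u ^+ 2 * s ^+ 2 + 2 * t * u * s); last by ring.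
by rewrite norm1; ring.
Qed.

Lemma norm1_expr3 :
  (t + u * s) ^+ 3 = (4 * t ^+ 3 - 3 * t) + ((4 * t ^+ 2 - 1) * u) * s.
Proof.
rewrite exprSr norm1_expr2.
rewrite (_ : _ * _ = 2 * t ^+ 3 - t + 2 * t * (u ^+ 2 * s ^+ 2)
                     + (2 * t ^+ 2 - 1 + 2 * t ^+ 2) * u * s); last by ring.
by rewrite norm1; ring.
Qed.

End NormOnePowers.

Section SalemConjugate.

Context {mu : algC} {d : nat} {tau : {rmorphism algC -> algC}}.
Hypothesis salem_mu : salem_of_degree mu d.
Hypothesis tau_nontrivial : exists x, Qadj (mu + mu^-1) x /\ tau x != x.

Lemma salem_neq0 : mu != 0.
Proof. by case: salem_mu => _ _ mu_gt1 _; rewrite gt_eqF // (lt_trans ltr01). Qed.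

Lemma tau_trace_neq : tau (mu + mu^-1) != mu + mu^-1.
Proof.
case: tau_nontrivial => x [Kx]; apply: contra => /eqP tau_a; apply/eqP.
by apply: (gen_field_min (is_subfield_fixed tau) _ _ Kx) => _ ->.
Qed.

Lemma norm_tau_salem : `|tau mu| = 1.
Proof.
case: salem_mu => _ _ _ [p [_ [_ [_ [p_mu [_ p_unit]]]]]].
apply: p_unit.
- have <- : map_poly tau (map_poly ratr p) = map_poly ratr p.
    by rewrite -map_poly_comp; apply: eq_map_poly => r /=; rewrite fmorph_rat.
  by rewrite /root horner_map (rootP p_mu) rmorph0.
- by apply: contraNneq tau_trace_neq => tau_mu; rewrite rmorphD fmorphV tau_mu.
- by apply: contraNneq tau_trace_neq => tau_mu; rewrite rmorphD fmorphV tau_mu invrK addrC.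
Qed.

Lemma Qadj_trace_real {x} : Qadj (mu + mu^-1) x -> x \is Num.real /\ tau x \is Num.real.
Proof.
have sub_real := is_subfield_meet is_subfield_real (is_subfield_preim tau is_subfield_real).
apply: (gen_field_min sub_real) => _ ->.
case: salem_mu => _ mu_real _ _; split; first by rewrite realD ?realV.
rewrite CrealE rmorphD fmorphV invC_norm norm_tau_salem expr1n invr1 mul1r.
by rewrite rmorphD /= conjCK addrC.
Qed.

Lemma salem_notin_Qadj_trace : ~ Qadj (mu + mu^-1) mu.
Proof.
move=> /Qadj_trace_real [_ tau_mu_real].
have : tau mu ^+ 2 == 1 ^+ 2 by rewrite -(real_normK tau_mu_real) norm_tau_salem.
case: salem_mu => _ _ mu_gt1 _.
rewrite eqf_sqr -(rmorph1 tau) -rmorphN !(inj_eq (fmorph_inj tau)).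
by rewrite !gt_eqF // (lt_trans _ mu_gt1) // (lt_trans (ltrN10 _) ltr01).
Qed.

End SalemConjugate.

Theorem proposition5p4 (mu : algC) (tau : {rmorphism algC -> algC})
    (D s t u : algC) :
  salem_of_degree mu 4 ->
  (exists x, Qadj (mu + mu^-1) x /\ tau x != x) ->
  ring_of_integers (Qadj (mu + mu^-1)) D ->
  s ^+ 2 = D ->
  (forall z, Qadj mu z <-> Fadj (Qadj (mu + mu^-1)) s z) ->
  ring_of_integers (Qadj (mu + mu^-1)) t ->
  ring_of_integers (Qadj (mu + mu^-1)) u ->
  mu = t + u * s ->
  exists m : nat, (m <= 2)%N /\
    exists tm um : algC,
      [/\ ring_of_integers (Qadj (mu + mu^-1)) tm,
          ring_of_integers (Qadj (mu + mu^-1)) um,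
          mu ^+ m.+1 = tm + um * s &
          1 / 2 < (tau tm) ^+ 2].
Proof.
move=> salem tau_nontrivial [KD _] sD _ Rt Ru mu_ts.
have subK : is_subfield (Qadj (mu + mu^-1)) := is_subfield_gen _.
have Ks2 : Qadj (mu + mu^-1) (s ^+ 2) by rewrite sD.
have [_ norm1] := subfield_norm1_coords _ subK (salem_notin_Qadj_trace salem tau_nontrivial)
  (salem_neq0 salem) (gen_field_sub erefl) Ks2 Rt.1 Ru.1 mu_ts.
pose c := tau t; have c_real : c \is Num.real := (Qadj_trace_real salem tau_nontrivial Rt.1).2.
have c2_neq : c ^+ 2 != 1 / 2.
  apply: contraNneq half_notin_Aint => c2_half.
  have <- : t ^+ 2 = 1 / 2.
    by apply: (fmorph_inj tau); rewrite rmorphXn c2_half fmorph_div rmorph1 rmorph_nat.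
  by rewrite rpredX //; case: Rt.
case/or3P: (chebyshev_sqr_gt_half (realX 2 c_real) c2_neq) => [c1 | c2 | c3].
- by exists 0%N; split=> //; exists t, u; rewrite expr1.
- exists 1%N; split=> //; exists (2 * t ^+ 2 - 1), (2 * t * u).
  split; [ring_of_integers_closure | ring_of_integers_closure | |].
  + by rewrite mu_ts norm1_expr2.
  + by rewrite rmorphB rmorphM rmorph_nat rmorphXn rmorph1.
- exists 2%N; split=> //; exists (4 * t ^+ 3 - 3 * t), ((4 * t ^+ 2 - 1) * u).
  split; [ring_of_integers_closure | ring_of_integers_closure | |].
  + by rewrite mu_ts norm1_expr3.
  + have -> : tau (4 * t ^+ 3 - 3 * t) = c * (4 * c ^+ 2 - 3).
      by rewrite rmorphB !rmorphM !rmorph_nat -/c; ring.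
    rewrite exprMn; exact: c3.
Qed.
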